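(* Let $q=3^m$ with $m\ge 1$, let $\alpha$ be a primitive element of $\mathbb{F}_{q^2}$, and let $\mathcal{C}$ be the ternary cyclic code of length $q^2-1$ whose parity-check polynomial is $p_1(x)p_2(x)$, where $p_1(x)$ and $p_2(x)$ are the minimal polynomials over $\mathbb{F}_3$ of $\alpha^{-1}$ and $\alpha^{-(q+2)}$ respectively; equivalently $\mathcal{C}=\{(\mathrm{Tr}_{\mathbb{F}_{q^2}/\mathbb{F}_3}(a\alpha^{i(q+2)}+b\alpha^i))_{i=0}^{q^2-2}:\ a,b\in\mathbb{F}_{q^2}\}$. Then $\mathcal{C}$ has parameters $[q^2-1,4m,\frac{2q(q-2)}{3}]$, and its weight distribution is: weight $0$ occurs once; weight $\frac{2q(q-2)}{3}$ occurs $\frac{q^4-q^3-q^2+q}{6}$ times; weight $\frac{2q(q-1)}{3}$ occurs $q^3-q$ times; weight $\frac{2q^2}{3}$ occurs $\frac{q^4-q^3+q^2+q}{2}-1$ times; weight $\frac{2q(q+1)}{3}$ occurs $\frac{q^4-q^3-q^2+q}{3}$ times.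
   Context: $[n,k,d]$ denotes a linear code of length $n$, dimension $k$ and minimum Hamming distance $d$; weights are Hamming weights. $\mathrm{Tr}_{\mathbb{F}_{q^2}/\mathbb{F}_3}$ is the absolute trace. *)

From mathcomp Require Import all_boot all_order all_algebra all_field.
Set Implicit Arguments. Unset Strict Implicit. Unset Printing Implicit Defensive.
Import GRing.Theory.
Local Open Scope ring_scope.

Definition qq (m : nat) : nat := (3 ^ m)%N.
Definition clen (m : nat) : nat := (qq m ^ 2 - 1)%N.

Definition abstr (F : finFieldType) (m : nat) (x : F) : F :=
  \sum_(j < 2 * m) x ^+ (3 ^ j).

Definition codeword (F : finFieldType) (m : nat) (alpha a b : F)
  : {ffun 'I_(clen m) -> F} :=
  [ffun i : 'I_(clen m) =>
     abstr m (a * alpha ^+ (i * (qq m + 2)) + b * alpha ^+ i)].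

Definition code (F : finFieldType) (m : nat) (alpha : F)
  : {set {ffun 'I_(clen m) -> F}} :=
  [set codeword m alpha ab.1 ab.2 | ab : F * F].

Definition hwt (F : finFieldType) (n : nat) (c : {ffun 'I_n -> F}) : nat :=
  #|[set i | c i != 0]|.

Definition wdist (F : finFieldType) (m : nat) (alpha : F) (w : nat) : nat :=
  #|[set c in code m alpha | hwt c == w]|.

From mathcomp Require Import all_boot all_order all_algebra all_field.
From mathcomp Require Import ring zify.
Set Implicit Arguments. Unset Strict Implicit. Unset Printing Implicit Defensive.
Import GRing.Theory.
Local Open Scope ring_scope.

(* Write the coordinate index as i = u + (q+1)k with u <= q and k < q-1, so
   that alpha^i = x s with x = alpha^u and s = alpha^((q+1)k) running over F_q^*.
   Since s^(q+2) = s^3 and Tr(y^3) = Tr(y), the i-th coordinate is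
   tr_{F_q/F_3}(s^3 G(x)), where G(x) = Tr_{F_{q^2}/F_q}(a x^(q+2) + b^3 x^3)
   lies in F_q.  Cubing permutes F_q^* and tr_{F_q/F_3} is nonzero on exactly 2q/3
   elements of F_q, so the codeword has weight (2q/3)(q+1-r), where r is the
   number of u <= q with G(alpha^u) = 0.  Now G(x) = x^3 P(x^(q-1)) for a
   polynomial P of degree at most 3 that vanishes only for a = b = 0, and the
   alpha^(u(q-1)) are distinct; hence r <= 3 for nonzero codewords, and for any
   four values of u the map (a, b) |-> (G(alpha^u))_u is a bijection from
   F_{q^2} x F_{q^2} onto F_q^4.  Counting pairs ((a, b), S) with S a j-subset of
   the zeros gives sum_(a,b) C(r, j) = C(q+1, j) q^(4-j) for j <= 3, and these
   four equations determine how many (a, b) have r = 0, 1, 2, 3. *)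

Section Counting.
Local Open Scope nat_scope.

Lemma sum_nat_bool_card (T : finType) (P : pred T) :
  \sum_(i : T) P i = #|[set i | P i]|.
Proof.
by rewrite -sum1_card [RHS]big_mkcond; apply: eq_bigr => i _; rewrite inE; case: (P i).
Qed.

Lemma big_nat_mul_residues (R : Type) (idx : R) (op : Monoid.com_law idx)
    (f : nat -> R) a b :
  \big[op/idx]_(0 <= i < b * a) f i =
  \big[op/idx]_(u < a) \big[op/idx]_(k < b) f (u + a * k).
Proof.
rewrite big_nat_mul big_mkord [RHS]exchange_big /=; apply: eq_bigr => k _.
rewrite -{1}[k * a]add0n big_addn mulSn addnK big_mkord.
by apply: eq_bigr => u _; rewrite mulnC.
Qed.

Lemma exists_superset_card (T : finType) (S : {set T}) n :
  #|S| <= n <= #|T| -> exists2 S' : {set T}, S \subset S' & #|S'| = n.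
Proof.
elim: n => [|n IHn] /andP[leSn lenT].
  by exists S => //; apply/eqP; rewrite -leqn0.
have [eqSn | ltSn] := eqVneq #|S| n.+1; first by exists S.
have [S' sSS' cardS'] : exists2 S' : {set T}, S \subset S' & #|S'| = n.
  by apply: IHn; rewrite -ltnS ltn_neqAle ltSn leSn ltnW.
have /subsetPn[x _ S'x] : ~~ ([set: T] \subset S').
  by rewrite subTset; apply: contraTneq lenT => S'T; rewrite -cardsT -S'T cardS' ltnn.
by exists (x |: S'); [exact: subset_trans sSS' (subsetUr _ _) | rewrite cardsU1 S'x cardS'].
Qed.

(* The hypotheses are the moment equations for j = 0, 1, 2, 3, where
   B2 = 'C(q + 1, 2) and B3 = 'C(q + 1, 3). *)
Lemma freq_solution (q B2 B3 n0 n1 n2 n3 : nat) : 2 <= q ->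
  B2 * 2 = q ^ 2 + q -> B3 * 6 + q = q ^ 3 ->
  1 + (n0 + n1 + n2 + n3) = q ^ 4 ->
  q + 1 + (n1 + 2 * n2 + 3 * n3) = (q + 1) * q ^ 3 ->
  B2 + (n2 + 3 * n3) = B2 * q ^ 2 ->
  B3 + n3 = B3 * q ->
  [/\ n3 = (q ^ 4 - q ^ 3 - q ^ 2 + q) %/ 6, n2 = q ^ 3 - q,
      n1 = (q ^ 4 - q ^ 3 + q ^ 2 + q) %/ 2 - 1
    & n0 = (q ^ 4 - q ^ 3 - q ^ 2 + q) %/ 3].
Proof.
move=> q_ge2 hB2 hB3 e0; rewrite mulnDl mul1n -expnS => e1 e2 e3.
have hB2q : B2 * q ^ 2 * 2 = q ^ 4 + q ^ 3 by rewrite mulnAC hB2; ring.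
have hB3q : B3 * q * 6 + q ^ 2 = q ^ 4.
  by rewrite mulnAC -[q ^ 2]/(q * q) -mulnDl hB3; ring.
have q4_ge : q ^ 3 + q ^ 2 <= q ^ 4.
  rewrite [q ^ 4]expnS [q ^ 3]expnS; nia.
have -> : q ^ 4 - q ^ 3 - q ^ 2 + q = n3 * 6 by lia.
have -> : q ^ 4 - q ^ 3 + q ^ 2 + q = (n1 + 1) * 2 by lia.
by split; rewrite ?mulnK ?addnK //; lia.
Qed.

Lemma freq3_formula_gt0 q : 2 <= q -> 0 < (q ^ 4 - q ^ 3 - q ^ 2 + q) %/ 6.
Proof.
move=> q_ge2; have pow_ge k : 2 * q ^ k <= q ^ k.+1 by rewrite expnS leq_mul2r q_ge2 orbT.
rewrite divn_gt0 //; have := pow_ge 1; have := pow_ge 2; have := pow_ge 3.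
by rewrite expn1; lia.
Qed.

End Counting.

Lemma card_roots_lt_size (R : finIdomainType) (p : {poly R}) (A : {set R}) :
  p != 0 -> {in A, forall x, root p x} -> (#|A| < size p)%N.
Proof.
move=> p_neq0 rootA; rewrite cardE max_poly_roots ?enum_uniq //.
by apply/allP => x; rewrite mem_enum; exact: rootA.
Qed.

Section CharThree.
Variables (F : fieldType) (char3 : 3 \in [pchar F]).

Lemma pchar_nat_exp3 n : [pchar F].-nat (3 ^ n)%N.
Proof. by rewrite pnatX (pnatE _ (isT : prime 3)) char3. Qed.

Lemma expr3nD n (x y : F) : (x + y) ^+ (3 ^ n) = x ^+ (3 ^ n) + y ^+ (3 ^ n).
Proof. exact/exprDn_pchar/pchar_nat_exp3. Qed.

Lemma expr3nB n (x y : F) : (x - y) ^+ (3 ^ n) = x ^+ (3 ^ n) - y ^+ (3 ^ n).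
Proof. by rewrite expr3nD exprNn_pchar ?pchar_nat_exp3. Qed.

Lemma expr3n0 n : (0 : F) ^+ (3 ^ n) = 0.
Proof. by rewrite expr0n expn_eq0. Qed.

Lemma expr3n_sum n (I : finType) (f : I -> F) :
  (\sum_i f i) ^+ (3 ^ n) = \sum_i f i ^+ (3 ^ n).
Proof. exact: (big_morph _ (expr3nD n) (expr3n0 n)). Qed.

Lemma expr3_inj : injective (fun x : F => x ^+ 3).
Proof.
move=> x y /eqP; rewrite -subr_eq0 -[3%N]/(3 ^ 1)%N -expr3nB expf_eq0 subr_eq0.
by case/andP=> _ /eqP.
Qed.

Lemma sum_expr3n_cube n (x : F) :
  x ^+ (3 ^ n) = x ->
  (\sum_(j < n) x ^+ (3 ^ j)) ^+ 3 = \sum_(j < n) x ^+ (3 ^ j).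
Proof.
move=> xn; rewrite (expr3n_sum 1).
have : \sum_(j < n.+1) x ^+ (3 ^ j) = x + \sum_(j < n) (x ^+ (3 ^ j)) ^+ 3.
  by rewrite big_ord_recl expr1; congr (_ + _); apply: eq_bigr => j _; rewrite -exprM -expnSr.
by rewrite big_ord_recr /= xn addrC => /addrI.
Qed.

End CharThree.

Lemma hwt0 (F : finFieldType) n : hwt (0 : {ffun 'I_n -> F}) = 0%N.
Proof. by apply: eq_card0 => i; rewrite !inE ffunE eqxx. Qed.

Section Code.
Variables (m : nat) (F : finFieldType) (alpha : F).
Hypotheses (m_gt0 : (0 < m)%N) (char3 : 3 \in [pchar F])
  (cardF : #|F| = (qq m ^ 2)%N) (prim : (qq m ^ 2 - 1).-primitive_root alpha).
Local Notation q := (qq m).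
Local Notation q3 := (3 ^ m.-1)%N.

Lemma q_eq3q3 : q = (3 * q3)%N.
Proof. by rewrite -expnS prednK. Qed.

Lemma q_gt0 : (0 < q)%N.
Proof. by rewrite expn_gt0. Qed.

Lemma q3_gt0 : (0 < q3)%N.
Proof. by rewrite expn_gt0. Qed.

Lemma q_ge3 : (3 <= q)%N.
Proof. by rewrite q_eq3q3 leq_pmulr ?q3_gt0. Qed.

Lemma clen_eq : clen m = ((q - 1) * (q + 1))%N.
Proof. by rewrite /clen -{2}(exp1n 2) subn_sqr addn1. Qed.

Lemma expr_q2 (x : F) : x ^+ (q ^ 2) = x.
Proof. by rewrite -cardF expf_card. Qed.

Lemma exprqD (x y : F) : (x + y) ^+ q = x ^+ q + y ^+ q.
Proof. exact: expr3nD. Qed.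

Lemma alpha_neq0 : alpha != 0.
Proof. by rewrite (prim_root_eq0 prim) -lt0n (prim_order_gt0 prim). Qed.

Lemma alpha_expr_clen : alpha ^+ clen m = 1.
Proof. exact: prim_expr_order prim. Qed.

Lemma alpha_expr_eq i j : (alpha ^+ i == alpha ^+ j) = (i == j %[mod clen m]).
Proof. exact: eq_prim_root_expr prim i j. Qed.

Definition Fq : {set F} := [set x | x ^+ q == x].
Definition Fqx : {set F} := Fq :\ 0.

Lemma Fq0 : 0 \in Fq.
Proof. by rewrite inE expr0n gtn_eqF ?q_gt0. Qed.

Definition Fqx_elt (k : 'I_(q - 1)) : F := alpha ^+ ((q + 1) * k).

Lemma Fqx_elt_in k : Fqx_elt k \in Fqx.
Proof.
rewrite !inE expf_neq0 ?alpha_neq0 //= -exprM.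
have -> : ((q + 1) * k * q = clen m * k + (q + 1) * k)%N.
  by rewrite clen_eq; have := q_ge3; move: (k : nat) => j; nia.
by rewrite exprD exprM alpha_expr_clen expr1n mul1r.
Qed.

Lemma Fqx_elt_inj : injective Fqx_elt.
Proof.
have lt_clen (k : 'I_(q - 1)) : ((q + 1) * k < clen m)%N.
  by rewrite clen_eq mulnC ltn_pmul2r ?addn1.
move=> k l /eqP; rewrite alpha_expr_eq !modn_small ?lt_clen //.
by rewrite eqn_pmul2l ?addn1 // => /eqP/val_inj.
Qed.

Lemma card_Fq : #|Fq| = q.
Proof.
apply/eqP; rewrite eqn_leq; apply/andP; split.
  have size_p : size ('X^q - 'X : {poly F}) = q.+1.
    rewrite size_polyDl ?size_polyXn // size_polyN size_polyX ltnS.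
    by have := q_ge3; lia.
  rewrite -ltnS -size_p card_roots_lt_size -?size_poly_eq0 ?size_p //.
  by move=> x; rewrite inE /root !hornerE => /eqP ->; rewrite subrr.
have -> : q = (1 + #|[set Fqx_elt k | k : 'I_(q - 1)]|)%N.
  by rewrite card_imset ?card_ord; [have := q_ge3; lia | exact: Fqx_elt_inj].
rewrite (cardsD1 0 Fq) Fq0 leq_add2l subset_leq_card //.
by apply/subsetP => _ /imsetP[k _ ->]; exact: Fqx_elt_in.
Qed.

Lemma card_Fqx : #|Fqx| = (q - 1)%N.
Proof. by rewrite -card_Fq (cardsD1 0 Fq) Fq0 add1n subn1. Qed.

(** * Traces *)

Definition trF3 (x : F) : F := \sum_(j < m) x ^+ (3 ^ j).
Definition trFq (x : F) : F := x + x ^+ q.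

Lemma trF3D x y : trF3 (x + y) = trF3 x + trF3 y.
Proof. by rewrite /trF3 -big_split /=; apply: eq_bigr => j _; rewrite expr3nD. Qed.

Lemma trF3_0 : trF3 0 = 0.
Proof. by rewrite /trF3 big1 // => j _; rewrite expr3n0. Qed.

Lemma trFqB x y : trFq (x - y) = trFq x - trFq y.
Proof. by rewrite /trFq (expr3nB char3 m); ring. Qed.

Lemma trFq_Fq y : trFq y \in Fq.
Proof. by rewrite inE /trFq exprqD -exprM mulnn expr_q2 addrC. Qed.

Lemma abstr_trF3 (y : F) : abstr m y = trF3 (trFq y).
Proof.
rewrite /abstr /trFq trF3D /trF3 mul2n -addnn big_split_ord /=; congr (_ + _).
by apply: eq_bigr => j _; rewrite /= expnD exprM.
Qed.

Lemma abstrD (x y : F) : abstr m (x + y) = abstr m x + abstr m y.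
Proof. by rewrite /abstr -big_split /=; apply: eq_bigr => j _; rewrite expr3nD. Qed.

Lemma abstrB (x y : F) : abstr m (x - y) = abstr m x - abstr m y.
Proof. by rewrite /abstr -sumrB /=; apply: eq_bigr => j _; rewrite expr3nB. Qed.

Lemma abstr0 : abstr m (0 : F) = 0.
Proof. by rewrite /abstr big1 // => j _; rewrite expr3n0. Qed.

Lemma abstrX3 (y : F) : abstr m (y ^+ 3) = abstr m y.
Proof.
rewrite /abstr -(sum_expr3n_cube char3 (n := 2 * m) (x := y)); last first.
  by rewrite mulnC expnM expr_q2.
by rewrite (expr3n_sum char3 1); apply: eq_bigr => j _; rewrite exprAC.
Qed.

Lemma trF3_vals w : w \in Fq -> [\/ trF3 w = 0, trF3 w = 1 | trF3 w = -1].
Proof.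
rewrite inE => /eqP /(sum_expr3n_cube char3); rewrite -/(trF3 w); set t := trF3 w => t3.
have : t * (t - 1) * (t + 1) = t ^+ 3 - t by ring.
rewrite t3 subrr.
by move/eqP; rewrite !mulf_eq0 subr_eq0 addr_eq0 => /orP[/orP[]|] /eqP; constructor.
Qed.

Definition trF3_poly (c : F) : {poly F} := \sum_(j < m) 'X^(3 ^ j) - c%:P.

Lemma size_trF3_poly c : size (trF3_poly c) = q3.+1.
Proof.
have size_low : (size (\sum_(j < m.-1) 'X^(3 ^ j) : {poly F})%R < q3.+1)%N.
  rewrite ltnS (leq_trans (size_sum _ _ _)) //; apply/bigmax_leqP => j _.
  by rewrite size_polyXn ltn_exp2l.
have size_sum : size (\sum_(j < m) 'X^(3 ^ j) : {poly F}) = q3.+1.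
  rewrite -(big_mkord xpredT (fun j => 'X^(3 ^ j))) -{1}(prednK m_gt0).
  rewrite big_nat_recr //= big_mkord.
  by rewrite addrC size_polyDl size_polyXn.
rewrite /trF3_poly size_polyDl size_sum // size_polyN.
by rewrite (leq_ltn_trans (size_polyC_leq1 _)) // ltnS q3_gt0.
Qed.

Lemma card_trF3_eq c : (#|[set w in Fq | trF3 w == c]| <= q3)%N.
Proof.
rewrite -ltnS -(size_trF3_poly c) card_roots_lt_size -?size_poly_eq0 ?size_trF3_poly //.
move=> w; rewrite inE => /andP[_ /eqP trw]; rewrite /root /trF3_poly.
rewrite hornerD hornerN horner_sum hornerC -trw subr_eq0 /trF3.
by under eq_bigr do rewrite hornerXn.
Qed.

Lemma card_trF3_neq0 : #|[set w in Fq | trF3 w != 0]| = (2 * q3)%N.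
Proof.
have := cardsID [set w | trF3 w == 0] Fq.
rewrite card_Fq q_eq3q3.
have -> : Fq :&: [set w | trF3 w == 0] = [set w in Fq | trF3 w == 0].
  by apply/setP => w; rewrite !inE.
have -> : Fq :\: [set w | trF3 w == 0] = [set w in Fq | trF3 w != 0].
  by apply/setP => w; rewrite !inE andbC.
have le_nz : (#|[set w in Fq | trF3 w != 0%R]| <= 2 * q3)%N.
  rewrite mul2n -addnn; apply: leq_trans (leq_add (card_trF3_eq 1) (card_trF3_eq (-1))).
  apply: leq_trans (subset_leq_card _) (leq_card_setU _ _).
  apply/subsetP => w; rewrite inE => /andP[wFq]; have := wFq; rewrite !inE => ->.
  by case: (trF3_vals wFq) => ->; rewrite ?eqxx ?orbT.
by have := card_trF3_eq 0; lia.
Qed.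

(** * Weights and the zeros of G *)

Definition Gfun (a b x : F) : F := trFq (a * x ^+ (q + 2) + b ^+ 3 * x ^+ 3).

Lemma abstr_scale_Fq a b x s : s \in Fq ->
  abstr m (a * (x * s) ^+ (q + 2) + b * (x * s)) = trF3 (s ^+ 3 * Gfun a b x).
Proof.
rewrite inE => /eqP sq.
have sq2 : s ^+ (q + 2) = s ^+ 3 by rewrite exprD sq -exprS.
rewrite abstrD -(abstrX3 (b * (x * s))) -abstrD abstr_trF3 /Gfun /trFq.
set H := a * x ^+ (q + 2) + b ^+ 3 * x ^+ 3.
have -> : a * (x * s) ^+ (q + 2) + (b * (x * s)) ^+ 3 = s ^+ 3 * H.
  by rewrite /H !exprMn sq2; ring.
by rewrite exprMn -exprM mulnC exprM sq -mulrDr.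
Qed.

Lemma Fqx_scale_cube_inj G : G != 0 -> injective (fun k => Fqx_elt k ^+ 3 * G).
Proof. by move=> G_neq0 k l /(mulIf G_neq0) /(expr3_inj char3) /Fqx_elt_inj. Qed.

Lemma Fqx_scale_cube G : G \in Fqx ->
  [set Fqx_elt k ^+ 3 * G | k : 'I_(q - 1)] = Fqx.
Proof.
rewrite !inE => /andP[G_neq0 /eqP Gq].
apply/eqP; rewrite eqEcard card_imset; last exact: Fqx_scale_cube_inj.
rewrite card_ord card_Fqx leqnn andbT.
apply/subsetP => _ /imsetP[k _ ->]; have := Fqx_elt_in k; rewrite !inE.
case/andP=> k_neq0 /eqP kq; rewrite mulf_neq0 ?expf_neq0 ?alpha_neq0 //=.
by rewrite exprMn -exprM mulnC exprM kq Gq.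
Qed.

Lemma count_Fqx_coset a b x :
  (\sum_(k < q - 1)
     (abstr m (a * (x * Fqx_elt k) ^+ (q + 2) + b * (x * Fqx_elt k))%R != 0%R))%N =
  if Gfun a b x == 0 then 0%N else (2 * q3)%N.
Proof.
have Fqx_elt_Fq k : Fqx_elt k \in Fq by have := Fqx_elt_in k; rewrite inE => /andP[].
under eq_bigr => k _ do rewrite abstr_scale_Fq //.
have [-> | G_neq0] := eqVneq (Gfun a b x) 0.
  by rewrite big1 // => k _; rewrite mulr0 trF3_0 eqxx.
have GFqx : Gfun a b x \in Fqx by rewrite in_setD1 G_neq0 trFq_Fq.
rewrite sum_nat_bool_card -card_trF3_neq0 -(card_imset _ (Fqx_scale_cube_inj G_neq0)).
apply: eq_card => w; rewrite inE; apply/imsetP/andP => [[k] | [wFq trw]].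
  rewrite inE => trk ->; split => //.
  have : Fqx_elt k ^+ 3 * Gfun a b x \in Fqx.
    by rewrite -(Fqx_scale_cube GFqx); apply/imsetP; exists k.
  by rewrite in_setD1 => /andP[].
have : w \in Fqx by rewrite in_setD1 wFq andbT; apply: contraNneq trw => ->; rewrite trF3_0.
by rewrite -(Fqx_scale_cube GFqx) => /imsetP[k _ wE]; exists k; rewrite ?inE -?wE.
Qed.

Definition Gzeros (a b : F) : {set 'I_(q + 1)} :=
  [set u : 'I_(q + 1) | Gfun a b (alpha ^+ u) == 0].

Definition nzeros (ab : F * F) : nat := #|Gzeros ab.1 ab.2|.

Definition wt (k : nat) : nat := (2 * q3 * (q + 1 - k))%N.

Lemma hwt_codeword ab : hwt (codeword m alpha ab.1 ab.2) = wt (nzeros ab).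
Proof.
case: ab => a b; rewrite -[nzeros _]/#|Gzeros a b| /hwt.
rewrite -(sum_nat_bool_card (fun i => codeword m alpha a b i != 0)).
under eq_bigr => i _ do rewrite ffunE.
rewrite -(big_mkord xpredT
  (fun i => (abstr m (a * alpha ^+ (i * (q + 2)) + b * alpha ^+ i) != 0 : nat))).
rewrite clen_eq big_nat_mul_residues.
transitivity (\sum_(u < q + 1 | u \notin Gzeros a b) 2 * q3)%N.
  rewrite [RHS]big_mkcond; apply: eq_bigr => u _; rewrite inE if_neg -count_Fqx_coset.
  by apply: eq_bigr => k _; rewrite /Fqx_elt -exprD exprM.
rewrite sum_nat_cond_const /wt mulnC; congr (_ * _)%N.
have := cardsC (Gzeros a b); rewrite card_ord.
have -> : #|[set u | u \notin Gzeros a b]| = #|~: Gzeros a b|.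
  by apply: eq_card => u; rewrite !inE.
lia.
Qed.

Definition Gpoly (a b : F) : {poly F} := Poly [:: b ^+ 3; a; a ^+ q; (b ^+ 3) ^+ q].

Lemma Gfun_Gpoly a b x : x != 0 -> Gfun a b x = x ^+ 3 * (Gpoly a b).[x ^+ (q - 1)].
Proof.
move=> x_neq0; rewrite horner_Poly /= /Gfun /trFq exprqD !exprMn.
have xq : x ^+ q = x ^+ (q - 1) * x by rewrite -exprSr subn1 prednK ?q_gt0.
have xqq : (x ^+ q) ^+ q = x by rewrite -exprM mulnn expr_q2.
rewrite exprD exprMn [(x ^+ 2) ^+ q]exprAC xqq xq.
ring.
Qed.

Lemma alpha_expr_q1_inj : injective (fun u : 'I_(q + 1) => alpha ^+ (u * (q - 1))).
Proof.
have q1_gt0 : (0 < q - 1)%N by rewrite subn_gt0 (leq_trans _ q_ge3).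
have lt_clen (u : 'I_(q + 1)) : (u * (q - 1) < clen m)%N by rewrite clen_eq mulnC ltn_pmul2l.
move=> u v /eqP; rewrite alpha_expr_eq !modn_small ?lt_clen //.
by rewrite eqn_pmul2r // => /eqP/val_inj.
Qed.

Lemma Gzeros_card_ge4 a b : (4 <= #|Gzeros a b|)%N -> a = 0 /\ b = 0.
Proof.
move=> card_ge4.
have Gpoly0 : Gpoly a b = 0.
  apply/eqP; apply: contraTT card_ge4 => Gpoly_neq0; rewrite -ltnNge.
  apply: (leq_trans _ (size_Poly [:: b ^+ 3; a; a ^+ q; (b ^+ 3) ^+ q])).
  rewrite -(card_imset _ alpha_expr_q1_inj).
  apply: card_roots_lt_size => // _ /imsetP[u uGz ->]; move: uGz.
  have au_neq0 : alpha ^+ u != 0 by rewrite expf_neq0 ?alpha_neq0.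
  by rewrite inE Gfun_Gpoly // mulf_eq0 expf_eq0 (negbTE au_neq0) andbF -exprM.
have := congr1 (fun p : {poly F} => p`_0) Gpoly0.
have := congr1 (fun p : {poly F} => p`_1) Gpoly0.
rewrite /Gpoly !coef_Poly /= !coef0 => -> /eqP; rewrite expf_eq0 /=.
by move/eqP.
Qed.

Lemma GfunB a b a' b' x : Gfun (a - a') (b - b') x = Gfun a b x - Gfun a' b' x.
Proof.
have cubeB : (b - b') ^+ 3 = b ^+ 3 - b' ^+ 3 := expr3nB char3 1 b b'.
by rewrite /Gfun -trFqB cubeB; congr trFq; ring.
Qed.

Lemma Gfun00 x : Gfun 0 0 x = 0.
Proof. by have := GfunB 0 0 0 0 x; rewrite !subrr. Qed.

(** * Counting the (a, b) by their zeros *)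

Definition Gvec (S : {set 'I_(q + 1)}) (ab : F * F) :
    {dffun forall u : 'I_(q + 1), F} :=
  [ffun u => if u \in S then Gfun ab.1 ab.2 (alpha ^+ u) else 0].

Definition Fq_on (S : {set 'I_(q + 1)}) (u : 'I_(q + 1)) : {set F} :=
  if u \in S then Fq else [set 0].

Lemma card_setXn_Fq_on S : #|setXn (Fq_on S)| = (q ^ #|S|)%N.
Proof.
rewrite cardsXn -prod_nat_const [RHS]big_mkcond /=; apply: eq_bigr => u _.
by rewrite /Fq_on; case: (u \in S); rewrite ?card_Fq ?cards1.
Qed.

Lemma Gvec_inj (S : {set 'I_(q + 1)}) : #|S| = 4%N -> injective (Gvec S).
Proof.
move=> cardS [a b] [a' b'] /ffunP eqG.
have SG : S \subset Gzeros (a - a') (b - b').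
  apply/subsetP => u uS; have := eqG u; rewrite !ffunE uS inE GfunB => ->.
  by rewrite subrr.
have := leq_trans (eq_leq (esym cardS)) (subset_leq_card SG).
case/Gzeros_card_ge4 => /eqP + /eqP.
by rewrite !subr_eq0 => /eqP-> /eqP->.
Qed.

Lemma Gvec_onto (S : {set 'I_(q + 1)}) : #|S| = 4%N -> Gvec S @: setT = setXn (Fq_on S).
Proof.
move=> cardS; apply/eqP; rewrite eqEcard card_imset; last exact: Gvec_inj.
rewrite cardsT card_prod cardF -expnD card_setXn_Fq_on cardS leqnn andbT.
apply/subsetP => _ /imsetP[[a b] _ ->]; apply/setXnP => u.
by rewrite ffunE /Fq_on; case: (u \in S); [exact: trFq_Fq | exact: set11].
Qed.

Lemma card_Gzeros_super (S : {set 'I_(q + 1)}) : (#|S| <= 4)%N ->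
  #|[set ab : F * F | S \subset Gzeros ab.1 ab.2]| = (q ^ (4 - #|S|))%N.
Proof.
move=> cardS.
have [S' sSS' cardS'] : exists2 S' : {set 'I_(q + 1)}, S \subset S' & #|S'| = 4%N.
  by apply: exists_superset_card; rewrite cardS card_ord; have := q_ge3; lia.
have vanish_onto :
    Gvec S' @: [set ab : F * F | S \subset Gzeros ab.1 ab.2] = setXn (Fq_on (S' :\: S)).
  apply/setP => f; apply/imsetP/setXnP => [[[a b]] | f_on].
    rewrite inE => /subsetP /= SG -> u; rewrite ffunE /Fq_on !inE.
    case: (boolP (u \in S)) => [uS | _].
      by have := SG u uS; rewrite (subsetP sSS' u uS) !inE.
    by case: (u \in S'); [exact: trFq_Fq | exact: set11].
  have : f \in Gvec S' @: setT.
    rewrite Gvec_onto //; apply/setXnP => u; have := f_on u; rewrite /Fq_on !inE.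
    by case: (u \in S') => //; case: (u \in S) => //= /set1P ->; exact: Fq0.
  case/imsetP=> [[a b] _ fE]; exists (a, b) => //; rewrite inE; apply/subsetP => u uS.
  by have := f_on u; rewrite fE ffunE (subsetP sSS' u uS) /Fq_on in_setD uS /= !inE.
rewrite -(card_imset _ (Gvec_inj cardS')) vanish_onto card_setXn_Fq_on.
by rewrite cardsD (setIidPr sSS') cardS'.
Qed.

Lemma nzeros00 : nzeros (0, 0) = (q + 1)%N.
Proof. by rewrite -[RHS]card_ord; apply: eq_card => u; rewrite inE Gfun00 eqxx. Qed.

Lemma nzeros_le3 ab : ab != (0, 0) -> (nzeros ab <= 3)%N.
Proof.
case: ab => a b; apply: contraR; rewrite -ltnNge /nzeros /= => /Gzeros_card_ge4[-> ->].
by rewrite eqxx.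
Qed.

Lemma sum_bin_nzeros j : (j <= 3)%N ->
  (\sum_(ab : F * F) 'C(nzeros ab, j))%N = ('C(q + 1, j) * q ^ (4 - j))%N.
Proof.
move=> le_j3.
rewrite (eq_bigr (fun ab : F * F => \sum_(S : {set 'I_(q + 1)})
    ((S \subset Gzeros ab.1 ab.2) && (#|S| == j) : nat)))%N => [|ab _]; last first.
  by rewrite sum_nat_bool_card /nzeros -cards_draws.
rewrite exchange_big /=.
rewrite (eq_bigr (fun S : {set 'I_(q + 1)} => q ^ (4 - j) * (#|S| == j : nat)))%N => [|S _].
  by rewrite -big_distrr /= sum_nat_bool_card card_draws card_ord mulnC.
have [cardS | _] := eqVneq #|S| j; last by rewrite muln0 big1 // => ab _; rewrite andbF.
under eq_bigr => ab _ do rewrite andbT.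
by rewrite muln1 sum_nat_bool_card card_Gzeros_super cardS // (leq_trans le_j3).
Qed.

Definition freq (k : nat) : nat := #|[set ab : F * F | (ab != (0, 0)) && (nzeros ab == k)]|.

Lemma sum_bin_nzeros_freq j :
  (\sum_(ab : F * F) 'C(nzeros ab, j))%N =
  ('C(q + 1, j) + ('C(0, j) * freq 0 + 'C(1, j) * freq 1 + 'C(2, j) * freq 2
                   + 'C(3, j) * freq 3))%N.
Proof.
rewrite (bigD1 (0, 0)) //= nzeros00; congr (_ + _)%N.
have freqE k : (freq k = \sum_(ab : F * F | ab != (0%R, 0%R)) (nzeros ab == k))%N.
  rewrite /freq -sum_nat_bool_card [RHS]big_mkcond.
  by apply: eq_bigr => ab _; case: (ab != _).
rewrite !freqE !big_distrr -!big_split /=; apply: eq_bigr => ab /nzeros_le3.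
by case: (nzeros ab) => [|[|[|[|]]]] //= _; rewrite ?muln0 ?muln1 ?addn0 ?add0n.
Qed.

Lemma freq_values :
  [/\ freq 3 = ((q ^ 4 - q ^ 3 - q ^ 2 + q) %/ 6)%N, freq 2 = (q ^ 3 - q)%N,
      freq 1 = ((q ^ 4 - q ^ 3 + q ^ 2 + q) %/ 2 - 1)%N
    & freq 0 = ((q ^ 4 - q ^ 3 - q ^ 2 + q) %/ 3)%N].
Proof.
have moment (j k : nat) : (j + k = 4)%N -> (0 < k)%N ->
    ('C(q + 1, j) + ('C(0, j) * freq 0 + 'C(1, j) * freq 1 + 'C(2, j) * freq 2
                    + 'C(3, j) * freq 3))%N = ('C(q + 1, j) * q ^ k)%N.
  move=> jk k_gt0; have le_j3 : (j <= 3)%N by lia.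
  by rewrite -sum_bin_nzeros_freq sum_bin_nzeros // -jk addKn.
move: (moment 0%N 4%N erefl isT) (moment 1%N 3%N erefl isT) (moment 2%N 2%N erefl isT)
  (moment 3%N 1%N erefl isT).
rewrite !binS !bin0 !bin0n !bin1 /= => e0 e1 e2 e3.
apply: (freq_solution (B2 := 'C(q + 1, 2)) (B3 := 'C(q + 1, 3))); try lia.
- exact: leq_trans q_ge3.
- by rewrite bin_ffact !ffactnS ffactn0 addn1 /=; ring.
- by rewrite bin_ffact !ffactnS ffactn0 addn1 -(prednK q_gt0) /=; ring.
Qed.

Lemma codewordB a b a' b' :
  codeword m alpha (a - a') (b - b') = codeword m alpha a b - codeword m alpha a' b'.
Proof. by apply/ffunP => i; rewrite !ffunE -abstrB; congr abstr; ring. Qed.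

Lemma wt_gt0 k : (k <= 3)%N -> (0 < wt k)%N.
Proof. by rewrite /wt !muln_gt0 q3_gt0 subn_gt0 => le_k3; have := q_ge3; lia. Qed.

Lemma leq_wt k l : (k <= l)%N -> (wt l <= wt k)%N.
Proof. by move=> le_kl; rewrite leq_mul2l leq_sub2l ?orbT. Qed.

Lemma codeword_inj : injective (fun ab : F * F => codeword m alpha ab.1 ab.2).
Proof.
move=> [a b] [a' b'] /= eq_cw.
have := hwt_codeword (a - a', b - b').
rewrite /= codewordB eq_cw subrr hwt0 => /esym wt0.
have /eqP[/eqP + /eqP] : (a - a', b - b') == (0, 0).
  by apply: contraT => /nzeros_le3 /wt_gt0; rewrite wt0.
by rewrite !subr_eq0 => /eqP-> /eqP->.
Qed.

Lemma card_code : #|code m alpha| = (3 ^ (4 * m))%N.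
Proof.
rewrite card_imset; last exact: codeword_inj.
by rewrite card_prod cardF -expnD -expnM mulnC.
Qed.

Lemma wdist_nzeros w :
  wdist m alpha w = #|[set ab : F * F | wt (nzeros ab) == w]|.
Proof.
rewrite /wdist -(card_imset _ codeword_inj); apply: eq_card => c.
rewrite !inE; apply/andP/imsetP => [[/imsetP[ab _ ->] wt_ab] | [ab]].
  by exists ab; rewrite // inE -hwt_codeword.
by rewrite inE -hwt_codeword => wt_ab ->; split => //; apply: imset_f.
Qed.

Lemma wdist0 : wdist m alpha 0 = 1%N.
Proof.
rewrite wdist_nzeros -(cards1 (0 : F, 0 : F)); apply: eq_card => ab; rewrite !inE.
have [-> | ab_neq0] := eqVneq ab (0, 0).
  by rewrite nzeros00 /wt subnn muln0.
by rewrite eqn0Ngt wt_gt0 ?nzeros_le3.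
Qed.

Lemma wdist_wt k : (k <= 3)%N -> wdist m alpha (wt k) = freq k.
Proof.
move=> le_k3; rewrite wdist_nzeros; apply: eq_card => ab; rewrite !inE.
have [-> | ab_neq0] := eqVneq ab (0, 0).
  by rewrite nzeros00 [wt (q + 1)]/wt subnn muln0 eq_sym eqn0Ngt wt_gt0.
have inj_wt : {in [pred l | l <= 3]%N &, injective wt}.
  move=> l l'; rewrite !inE => le_l3 le_l'3 /eqP; rewrite eqn_pmul2l ?muln_gt0 ?q3_gt0 //.
  by move=> /eqP; have := q_ge3; lia.
by apply/eqP/eqP => [/inj_wt -> // | -> //]; rewrite inE nzeros_le3.
Qed.

Lemma hwt_code c : c \in code m alpha -> c != 0 -> exists2 k, (k <= 3)%N & hwt c = wt k.
Proof.
case/imsetP=> ab _ ->; rewrite hwt_codeword => cw_neq0.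
exists (nzeros ab) => //; apply: nzeros_le3; apply: contraNneq cw_neq0 => ->.
by apply/eqP/ffunP => i; rewrite !ffunE !mul0r addr0 abstr0.
Qed.

Lemma weight_forms :
  [/\ (2 * q * (q - 2) %/ 3 = wt 3)%N, (2 * q * (q - 1) %/ 3 = wt 2)%N,
      (2 * q ^ 2 %/ 3 = wt 1)%N & (2 * q * (q + 1) %/ 3 = wt 0)%N].
Proof.
have wtE k : (2 * q * (q + 1 - k) %/ 3 = wt k)%N.
  rewrite -(mulnK (wt k) (isT : 0 < 3)%N) /wt; congr (_ %/ 3)%N.
  by rewrite q_eq3q3; ring.
rewrite -!wtE addnK subn0 mulnA; split => //; congr (_ * _ %/ 3)%N; lia.
Qed.

End Code.

Lemma wdist_gt0 (F : finFieldType) m (alpha : F) w :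
  (0 < wdist m alpha w)%N -> exists2 c, c \in code m alpha & hwt c = w.
Proof. by rewrite card_gt0 => /set0Pn[c]; rewrite inE => /andP[cC /eqP]; exists c. Qed.

Theorem corollary1 (m : nat) (F : finFieldType) (alpha : F) :
  (0 < m)%N ->
  3 \in [pchar F] ->
  #|F| = (qq m ^ 2)%N ->
  (qq m ^ 2 - 1).-primitive_root alpha ->
  let q := qq m in
  let C := code m alpha in
  (* dimension 4m over F_3 *)
  #|C| = (3 ^ (4 * m))%N /\
  (* minimum distance 2q(q-2)/3 *)
  (exists2 c, c \in C & hwt c = (2 * q * (q - 2) %/ 3)%N) /\
  (forall c, c \in C -> c != 0%R -> (2 * q * (q - 2) %/ 3 <= hwt c)%N) /\
  (* weight distribution *)
  wdist m alpha 0 = 1%N /\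
  wdist m alpha (2 * q * (q - 2) %/ 3) = ((q ^ 4 - q ^ 3 - q ^ 2 + q) %/ 6)%N /\
  wdist m alpha (2 * q * (q - 1) %/ 3) = (q ^ 3 - q)%N /\
  wdist m alpha (2 * q ^ 2 %/ 3) = ((q ^ 4 - q ^ 3 + q ^ 2 + q) %/ 2 - 1)%N /\
  wdist m alpha (2 * q * (q + 1) %/ 3) = ((q ^ 4 - q ^ 3 - q ^ 2 + q) %/ 3)%N /\
  (forall c, c \in C ->
     hwt c \in [:: 0; 2 * q * (q - 2) %/ 3; 2 * q * (q - 1) %/ 3;
                  2 * q ^ 2 %/ 3; 2 * q * (q + 1) %/ 3]%N).
Proof.
move=> m_gt0 char3 cardF prim q C; rewrite {}/q {}/C.
have [f3 f2 f1 f0] := freq_values m_gt0 char3 cardF prim.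
have [w3 w2 w1 w0] := weight_forms m_gt0 char3 cardF prim.
have wdist_wt_k := wdist_wt m_gt0 char3 cardF prim.
have hwt_C := hwt_code m_gt0 char3 cardF prim.
rewrite w3 w2 w1 w0 !wdist_wt_k // f3 f2 f1 f0.
split; first exact: card_code.
split.
  apply: wdist_gt0; rewrite wdist_wt_k // f3 freq3_formula_gt0 //.
  exact: leq_trans (q_ge3 m_gt0).
split; first by move=> c cC /(hwt_C c cC)[k le_k3 ->]; apply: leq_wt.
split; first exact: wdist0 m_gt0 char3 cardF prim.
do 4 (split; first by []).
move=> c cC; have [-> | /(hwt_C c cC)[k le_k3 ->]] := eqVneq c 0; first by rewrite hwt0 inE.
by case: k le_k3 => [|[|[|[|]]]] // _; rewrite !inE eqxx ?orbT.
Qed.
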